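(* Let $\mathbb{X}$ be a Euclidean space, $f:\mathbb{X}\to\mathbb{R}$ and $G:\mathbb{X}\to\mathbb{S}^n$ twice continuously differentiable, and consider $\min_x f(x)+\delta_{\mathbb{S}^n_+}(G(x))$. Let $\bar x$ be a stationary point and $\overline{Y}\in\mathcal{M}(\bar x)$. Let $A=G(\bar x)+\overline{Y}$ have eigenvalue decomposition $A=P\Lambda(A)P^T$ with $P=[P_\alpha\ P_\beta\ P_\gamma]$ orthogonal, where $\alpha,\beta,\gamma$ are the index sets of positive, zero and negative eigenvalues of $A$. Then there exists $q\in{\rm quad}\,\delta_{\mathbb{S}^n_+}(G(\bar x)\mid\overline{Y})$ such that for all $H\in\mathbb{S}^n$, $$q(H)=-\tfrac12\varUpsilon_{G(\bar x)}(\overline{Y},H)+\delta_{{\rm aff}\,\mathcal{C}_{\mathbb{S}^n_+}(G(\bar x),\overline{Y})}(H)=\sum_{i\in\alpha,\,j\in\gamma}\frac{-\lambda_j(A)}{\lambda_i(A)}(\widetilde H_{ij})^2+\delta_{{\rm aff}\,\mathcal{C}_{\mathbb{S}^n_+}(G(\bar x),\overline{Y})}(H),$$ where $\widetilde H=P^THP$.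
   Context: $\mathbb{S}^n$ is the space of real symmetric $n\times n$ matrices with the Frobenius inner product, $\mathbb{S}^n_+$ ($\mathbb{S}^n_-$) the cone of positive (negative) semidefinite matrices, $\delta_C$ the indicator function of a set $C$ (0 on $C$, $+\infty$ off $C$). $L(x,Y)=f(x)+\langle Y,G(x)\rangle$. $\mathcal{M}(\bar x)=\{Y\in\mathbb{S}^n\mid L_x'(\bar x,Y)=0,\ G(\bar x)\in\mathbb{S}^n_+,\ Y\in\mathbb{S}^n_-,\ \langle G(\bar x),Y\rangle=0\}$, and $\bar x$ is stationary if this set is nonempty. $\lambda_1(A)\ge\dots\ge\lambda_n(A)$ are the eigenvalues of $A$. The affine hull of the critical cone is ${\rm aff}\,\mathcal{C}_{\mathbb{S}^n_+}(G(\bar x),\overline{Y})=\{H\in\mathbb{S}^n\mid P_\beta^THP_\gamma=0,\ P_\gamma^THP_\gamma=0\}$. The $\sigma$-term is $\varUpsilon_{G(\bar x)}(\overline{Y},H)=2\langle\overline{Y},HG(\bar x)^{\dagger}H\rangle$, with $G(\bar x)^\dagger$ the Moore–Penrose pseudo-inverse. Second subderivative: for $g:\mathbb{Y}\to(-\infty,\infty]$ finite at $\bar z$ and $v\in\mathbb{Y}$, $\Delta_t^2g(\bar z\mid v)(u)=\frac{g(\bar z+tu)-g(\bar z)-t\langle v,u\rangle}{t^2/2}$ and $d^2g(\bar z\mid v)(w)=\liminf_{t\downarrow0,u\to w}\Delta_t^2g(\bar z\mid v)(u)$; $g$ is twice epi-differentiable at $\bar z$ for $v$ if $\Delta_t^2g(\bar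 z\mid v)$ epi-converges to $d^2g(\bar z\mid v)$ as $t\downarrow0$. A set-valued map $\mathcal{R}$ is generalized linear if its graph is a linear subspace. A function $q$ is a generalized quadratic form if $q(0)=0$ and $\partial q$ is generalized linear. $g$ is generalized twice differentiable at $z$ for $v$ if it is twice epi-differentiable there and $d^2g(z\mid v)$ is a generalized quadratic form. The quadratic bundle ${\rm quad}\,g(\bar z\mid\bar v)$ is the set of generalized quadratic forms $q$ for which there exist $(z^k,v^k)\to(\bar z,\bar v)$ with $g$ generalized twice differentiable at $z^k$ for $v^k$ and $\frac12 d^2g(z^k\mid v^k)$ epi-converging to $q$. *)

From HB Require Import structures.
From mathcomp Require Import all_boot all_order all_algebra.
From mathcomp Require Import all_classical all_reals all_analysis.
Set Implicit Arguments. Unset Strict Implicit. Unset Printing Implicit Defensive.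
Import Order.TTheory GRing.Theory Num.Theory.
Import numFieldNormedType.Exports.
Local Open Scope classical_set_scope.
Local Open Scope ring_scope.

(* Variational-analysis notions on a finite-dimensional real space V,       *)
(* taken relative to a linear subspace S of V (the "ambient" Euclidean      *)
(* space of the paper, here S^n inside 'M_n) with inner product ip.         *)
(* All points, directions, subgradients and approximating sequences are     *)
(* required to lie in S; the values of functions outside S play no role.    *)
Section VarAnalysis.
Context {R : realType} {V : normedModType R} (S : set V) (ip : V -> V -> R).

Definition sd_quot (g : V -> \bar R) (z v : V) (t : R) (u : V) : \bar R :=
  ((g (z + t *: u)%R - g z - (t * ip v u)%:E) * (2 / t ^+ 2)%:E)%E.

(* second subderivative  d^2 g(z | v)(w) = liminf_{t \downarrow 0, u -> w} Delta_t^2 g(z|v)(u)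
   = sup_{d > 0} inf { Delta_t^2 g(z|v)(u) | 0 < t < d, u in S, |u - w| < d } *)
Definition second_subderiv (g : V -> \bar R) (z v : V) (w : V) : \bar R :=
  ereal_sup [set ereal_inf [set y | exists t u, 0 < t < d /\ S u /\
                                      `|u - w| < d /\ y = sd_quot g z v t u]
            | d in [set d : R | 0 < d]].

Definition epi_conv (f_ : nat -> V -> \bar R) (f : V -> \bar R) : Prop :=
  forall w, S w ->
    (forall u_ : nat -> V, (forall k, S (u_ k)) -> u_ @ \oo --> w ->
        (f w <= limn_einf (fun k => f_ k (u_ k)))%E) /\
    (exists u_ : nat -> V, (forall k, S (u_ k)) /\ u_ @ \oo --> w /\
        (limn_esup (fun k => f_ k (u_ k)) <= f w)%E).

Definition twice_epi_diff (g : V -> \bar R) (z v : V) : Prop :=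
  g z \is a fin_num /\
  forall t_ : nat -> R, (forall k, 0 < t_ k) -> t_ @ \oo --> 0 ->
    epi_conv (fun k => sd_quot g z v (t_ k)) (second_subderiv g z v).

Definition reg_subgrad (g : V -> \bar R) (z v : V) : Prop :=
  S z /\ S v /\ g z \is a fin_num /\
  forall e : R, 0 < e -> exists d : R, 0 < d /\
    forall z', S z' -> `|z' - z| < d ->
      (g z + (ip v (z' - z)%R - e * `|z' - z|)%:E <= g z')%E.

Definition lim_subgrad (g : V -> \bar R) (z v : V) : Prop :=
  S z /\ S v /\ g z \is a fin_num /\
  exists z_ v_ : nat -> V,
    z_ @ \oo --> z /\ (fun k => g (z_ k)) @ \oo --> g z /\
    (forall k, reg_subgrad g (z_ k) (v_ k)) /\ v_ @ \oo --> v.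

Definition gen_linear (M : V -> V -> Prop) : Prop :=
  M 0 0 /\
  (forall z1 v1 z2 v2, M z1 v1 -> M z2 v2 -> M (z1 + z2) (v1 + v2)) /\
  (forall (a : R) z v, M z v -> M (a *: z) (a *: v)).

Definition gen_quad_form (q : V -> \bar R) : Prop :=
  q 0 = 0%E /\ gen_linear (lim_subgrad q).

Definition gen_twice_diff (g : V -> \bar R) (z v : V) : Prop :=
  twice_epi_diff g z v /\ gen_quad_form (second_subderiv g z v).

Definition quad_bundle (g : V -> \bar R) (zb vb : V) (q : V -> \bar R) : Prop :=
  gen_quad_form q /\
  exists z_ v_ : nat -> V,
    (forall k, S (z_ k) /\ S (v_ k)) /\
    z_ @ \oo --> zb /\ v_ @ \oo --> vb /\
    (forall k, gen_twice_diff g (z_ k) (v_ k)) /\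
    epi_conv (fun k w => ((2^-1)%:E * second_subderiv g (z_ k) (v_ k) w)%E) q.

End VarAnalysis.

Section Matrices.
Context {R : realType} (n : nat).

Definition symS : set 'M[R]_n := [set A | A^T = A].

Definition frob (A B : 'M[R]_n) : R := \tr (A^T *m B).

Definition psd (A : 'M[R]_n) : Prop :=
  A^T = A /\ forall x : 'cV[R]_n, 0 <= (x^T *m A *m x) 0 0.
Definition nsd (A : 'M[R]_n) : Prop := psd (- A).

Definition delta_psd (A : 'M[R]_n) : \bar R := if `[< psd A >] then 0%E else +oo%E.

Definition penrose (A X : 'M[R]_n) : Prop :=
  A *m X *m A = A /\ X *m A *m X = X /\ (A *m X)^T = A *m X /\ (X *m A)^T = X *m A.
Definition mp_pinv (A : 'M[R]_n) : 'M[R]_n := xget 0 [set X | penrose A X].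

Definition Upsilon (Z Y H : 'M[R]_n) : R := 2 * frob Y (H *m mp_pinv Z *m H).

End Matrices.

Section Smooth.
Context {R : realType} (m : nat).

Definition e_ (i : 'I_m) : 'rV[R]_m := delta_mx 0 i.

Definition C2 {W : normedModType R} (F : 'rV[R]_m -> W) : Prop :=
  continuous F /\
  (forall i x, derivable F x (e_ i)) /\
  (forall i, continuous ('D_(e_ i) F)) /\
  (forall i j x, derivable ('D_(e_ i) F) x (e_ j)) /\
  (forall i j, continuous ('D_(e_ j) ('D_(e_ i) F))).

Definition Lag {n} (f : 'rV[R]_m -> R) (G : 'rV[R]_m -> 'M[R]_n)
  (x : 'rV[R]_m) (Y : 'M[R]_n) : R := f x + frob Y (G x).

Definition multiplier {n} (f : 'rV[R]_m -> R) (G : 'rV[R]_m -> 'M[R]_n)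
  (xb : 'rV[R]_m) (Y : 'M[R]_n) : Prop :=
  (forall i, 'D_(e_ i) (fun x => Lag f G x Y) xb = 0) /\
  psd (G xb) /\ nsd Y /\ frob (G xb) Y = 0.

Definition stationary {n} (f : 'rV[R]_m -> R) (G : 'rV[R]_m -> 'M[R]_n)
  (xb : 'rV[R]_m) : Prop := exists Y, multiplier f G xb Y.

End Smooth.

(* affine hull of the critical cone:
   { H in S^n | P_beta^T H P_gamma = 0, P_gamma^T H P_gamma = 0 },
   beta = {i | lam i = 0}, gamma = {i | lam i < 0} *)
Definition aff_crit {R : realType} {n} (P : 'M[R]_n) (lam : 'I_n -> R)
  (H : 'M[R]_n) : Prop :=
  symS H /\
  (forall i j, lam i = 0 -> lam j < 0 -> (P^T *m H *m P) i j = 0) /\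
  (forall i j, lam i < 0 -> lam j < 0 -> (P^T *m H *m P) i j = 0).

Definition delta_set {R : realType} {T} (C : T -> Prop) (x : T) : \bar R :=
  if `[< C x >] then 0%E else +oo%E.

(* At a strictly complementary pair [Z = P diag(mu) P^T], [Y = P diag(nu) P^T]
   the indicator of the psd cone is twice epi-differentiable, with second
   subderivative [2 sum_(mu_i > 0, nu_j < 0) (- nu_j / mu_i) W~_ij^2] plus the
   indicator of [W~_ij = 0 for nu_i, nu_j < 0], where [W~ = P^T W P]: the lower
   bound comes from Schur complements of [diag(mu) + t W~], the upper bound
   from an explicit psd curve [Z + t W + t^2 E]. Complementarity forces
   [G xb = P diag(lam_+) P^T] and [Yb = P diag(lam_-) P^T]; replacing the zero
   eigenvalues by [1/(k+1)] in the first factor gives strictly complementary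
   pairs converging to [(G xb, Yb)]. Their weights [- lam_j (k+1)] on the
   beta-gamma block blow up, so the halved second subderivatives epi-converge
   to the weighted sum of squares on the affine hull of the critical cone, and
   the pseudo-inverse [P diag(1/lam_+) P^T] turns the sigma-term into the same
   sum. *)

From mathcomp Require Import all_boot all_order all_algebra.
From mathcomp Require Import all_classical all_reals all_analysis.
From mathcomp Require Import ring lra.
Import Order.TTheory GRing.Theory Num.Theory.
Import numFieldNormedType.Exports.
Local Open Scope classical_set_scope.
Local Open Scope ring_scope.

Section MatrixEntries.
Context {R : pzRingType} {m n : nat}.
Implicit Types (A B : 'M[R]_(m, n)).

Lemma addmxE A B i j : (A + B) i j = A i j + B i j. Proof. exact: mxE. Qed.
Lemma scalemxE a A i j : (a *: A) i j = a * A i j. Proof. exact: mxE. Qed.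
Lemma oppmxE A i j : (- A) i j = - A i j. Proof. exact: mxE. Qed.

End MatrixEntries.

Lemma ler_sum_term {R : numDomainType} {n} (f : 'I_n -> R) j :
  (forall p, 0 <= f p) -> f j <= \sum_p f p.
Proof. by move=> f0; rewrite (bigD1 j) //= lerDl sumr_ge0. Qed.

Lemma ler_sum_pair {R : numDomainType} {n} (f : 'I_n -> R) j j' :
  j != j' -> (forall p, 0 <= f p) -> f j + f j' <= \sum_p f p.
Proof.
move=> jj' f0; rewrite (bigD1 j) //= (bigD1 j') 1?eq_sym //=.
by rewrite addrA lerDl sumr_ge0.
Qed.

Section BilinearForm.
Context {R : comRingType} {n : nat}.
Implicit Types (M : 'M[R]_n) (x y z : 'I_n -> R).

Definition bform M x y : R := \sum_p \sum_q x p * M p q * y q.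

Lemma bformDl M x y z : bform M (fun p => x p + y p) z = bform M x z + bform M y z.
Proof.
rewrite /bform -big_split /=; apply: eq_bigr => p _.
by rewrite -big_split /=; apply: eq_bigr => q _; ring.
Qed.

Lemma bformDr M x y z : bform M z (fun p => x p + y p) = bform M z x + bform M z y.
Proof.
rewrite /bform -big_split /=; apply: eq_bigr => p _.
by rewrite -big_split /=; apply: eq_bigr => q _; ring.
Qed.

Lemma bformZl M a x y : bform M (fun p => a * x p) y = a * bform M x y.
Proof.
rewrite /bform mulr_sumr; apply: eq_bigr => p _.
by rewrite mulr_sumr; apply: eq_bigr => q _; ring.
Qed.

Lemma bformZr M a x y : bform M x (fun p => a * y p) = a * bform M x y.
Proof.
rewrite /bform mulr_sumr; apply: eq_bigr => p _.
by rewrite mulr_sumr; apply: eq_bigr => q _; ring.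
Qed.

Lemma bformMD M1 M2 x y : bform (M1 + M2) x y = bform M1 x y + bform M2 x y.
Proof.
rewrite /bform -big_split /=; apply: eq_bigr => p _.
by rewrite -big_split /=; apply: eq_bigr => q _; rewrite mxE; ring.
Qed.

Lemma bformMZ a M x y : bform (a *: M) x y = a * bform M x y.
Proof.
rewrite /bform mulr_sumr; apply: eq_bigr => p _.
by rewrite mulr_sumr; apply: eq_bigr => q _; rewrite mxE; ring.
Qed.

Definition diagf (mu : 'I_n -> R) : 'M[R]_n := diag_mx (\row_i mu i).

Lemma diagfE mu i j : diagf mu i j = if i == j then mu i else 0.
Proof. by rewrite !mxE; case: (i == j); rewrite ?mulr1n ?mulr0n. Qed.

Lemma diagf_tr mu : (diagf mu)^T = diagf mu.
Proof. exact: tr_diag_mx. Qed.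

Lemma diagf_mul mu nu : diagf mu *m diagf nu = diagf (fun i => mu i * nu i).
Proof. by rewrite mulmx_diag; congr diag_mx; apply/rowP => i; rewrite !mxE. Qed.

Lemma bform_diagf mu x y : bform (diagf mu) x y = \sum_p mu p * x p * y p.
Proof.
apply: eq_bigr => p _; rewrite (bigD1 p) //= big1 ?addr0.
  by rewrite diagfE eqxx; ring.
by move=> q /negbTE qp; rewrite diagfE eq_sym qp; ring.
Qed.

Definition basisf (j : 'I_n) : 'I_n -> R := fun p => (p == j)%:R.

Lemma bform_basisl M j y : bform M (basisf j) y = \sum_q M j q * y q.
Proof.
rewrite /bform (bigD1 j) //= [X in _ + X]big1 ?addr0.
  by apply: eq_bigr => q _; rewrite /basisf eqxx mul1r.
by move=> p /negbTE pj; apply: big1 => q _; rewrite /basisf pj !mul0r.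
Qed.

Lemma bform_basisr M x j : bform M x (basisf j) = \sum_p x p * M p j.
Proof.
apply: eq_bigr => p _; rewrite (bigD1 j) //= big1 ?addr0.
  by rewrite /basisf eqxx mulr1.
by move=> q /negbTE qj; rewrite /basisf qj mulr0.
Qed.

Lemma bform_basis M i j : bform M (basisf i) (basisf j) = M i j.
Proof.
rewrite bform_basisl (bigD1 j) //= big1 ?addr0; first by rewrite /basisf eqxx mulr1.
by move=> q /negbTE qj; rewrite /basisf qj mulr0.
Qed.

Lemma mx_quadE M (x : 'cV[R]_n) :
  (x^T *m M *m x) 0 0 = bform M (fun p => x p 0) (fun p => x p 0).
Proof.
rewrite mxE; under eq_bigr => q _ do rewrite mxE mulr_suml.
rewrite exchange_big; apply: eq_bigr => p _; apply: eq_bigr => q _.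
by rewrite !mxE.
Qed.

End BilinearForm.

Section Frobenius.
Context {R : realType} {n : nat}.
Implicit Types (A B C : 'M[R]_n).

Lemma frobE A B : frob A B = \sum_i \sum_j A i j * B i j.
Proof.
rewrite /frob /mxtrace; under eq_bigr => i _ do rewrite mxE.
rewrite exchange_big; apply: eq_bigr => i _; apply: eq_bigr => j _.
by rewrite mxE.
Qed.

Lemma frob_diagf mu B : frob (diagf mu) B = \sum_i mu i * B i i.
Proof.
rewrite frobE; apply: eq_bigr => i _; rewrite (bigD1 i) //= big1 ?addr0.
  by rewrite diagfE eqxx.
by move=> j /negbTE ji; rewrite diagfE eq_sym ji mul0r.
Qed.

Lemma frobC A B : frob A B = frob B A.
Proof. by rewrite /frob -mxtrace_tr trmx_mul trmxK. Qed.

Lemma frobDr A B C : frob A (B + C) = frob A B + frob A C.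
Proof. by rewrite /frob mulmxDr mxtraceD. Qed.

Lemma frobZr a A B : frob A (a *: B) = a * frob A B.
Proof. by rewrite /frob -scalemxAr mxtraceZ. Qed.

Lemma frobNr A B : frob A (- B) = - frob A B.
Proof. by rewrite -scaleN1r frobZr mulN1r. Qed.

Lemma symS0 : symS (0 : 'M[R]_n).
Proof. exact: trmx0. Qed.

Lemma symSD A B : symS A -> symS B -> symS (A + B).
Proof. by rewrite /symS /= => hA hB; rewrite linearD /= hA hB. Qed.

Lemma symSZ a A : symS A -> symS (a *: A).
Proof. by rewrite /symS /= => hA; rewrite linearZ /= hA. Qed.

Lemma symS_entry {A} : symS A -> forall i j, A j i = A i j.
Proof. by move=> hA i j; rewrite -{1}hA mxE. Qed.

End Frobenius.

Section OrthogonalBasis.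
Context {R : realType} {n : nat} (P : 'M[R]_n) (HP : P^T *m P = 1%:M).
Implicit Types (A B W X : 'M[R]_n).

Definition tilde W := P^T *m W *m P.
Definition untilde X := P *m X *m P^T.

Lemma orthogonal_mulmxT : P *m P^T = 1%:M.
Proof. exact: mulmx1C. Qed.

Lemma tildeK : cancel untilde tilde.
Proof. by move=> X; rewrite /tilde /untilde !mulmxA HP mul1mx -mulmxA HP mulmx1. Qed.

Lemma untildeK : cancel tilde untilde.
Proof.
by move=> W; rewrite /tilde /untilde !mulmxA orthogonal_mulmxT mul1mx
  -mulmxA orthogonal_mulmxT mulmx1.
Qed.

Lemma tilde0 : tilde 0 = 0.
Proof. by rewrite /tilde mulmx0 mul0mx. Qed.
Lemma tildeD A B : tilde (A + B) = tilde A + tilde B.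
Proof. by rewrite /tilde mulmxDr mulmxDl. Qed.
Lemma tildeZ a A : tilde (a *: A) = a *: tilde A.
Proof. by rewrite /tilde -scalemxAr -scalemxAl. Qed.
Lemma tildeN A : tilde (- A) = - tilde A.
Proof. by rewrite /tilde mulmxN mulNmx. Qed.
Lemma untildeD A B : untilde (A + B) = untilde A + untilde B.
Proof. by rewrite /untilde mulmxDr mulmxDl. Qed.
Lemma untildeZ a A : untilde (a *: A) = a *: untilde A.
Proof. by rewrite /untilde -scalemxAr -scalemxAl. Qed.

Lemma tildeM A B : tilde (A *m B) = tilde A *m tilde B.
Proof.
by rewrite /tilde !mulmxA -[P^T *m A *m P *m P^T]mulmxA orthogonal_mulmxT mulmx1.
Qed.

Lemma untildeM A B : untilde A *m untilde B = untilde (A *m B).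
Proof. by rewrite /untilde !mulmxA -[P *m A *m P^T *m P]mulmxA HP mulmx1. Qed.

Lemma tilde_sym {W} : symS W -> symS (tilde W).
Proof. by rewrite /symS /= => hW; rewrite /tilde !trmx_mul trmxK hW mulmxA. Qed.

Lemma untilde_sym {X} : symS X -> symS (untilde X).
Proof. by rewrite /symS /= => hX; rewrite /untilde !trmx_mul trmxK hX mulmxA. Qed.

Lemma tildeE W i j : tilde W i j = \sum_p \sum_q P p i * W p q * P q j.
Proof.
rewrite mxE; under eq_bigr => q _ do rewrite mxE mulr_suml.
rewrite exchange_big; apply: eq_bigr => p _; apply: eq_bigr => q _.
by rewrite !mxE.
Qed.

Lemma frob_tilde A B : frob (tilde A) (tilde B) = frob A B.
Proof.
rewrite /frob /tilde !trmx_mul trmxK !mulmxA.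
rewrite -[P^T *m A^T *m P *m P^T]mulmxA orthogonal_mulmxT mulmx1.
by rewrite mxtrace_mulC !mulmxA orthogonal_mulmxT mul1mx.
Qed.

Lemma psd_untildeP X : psd (untilde X) <-> symS X /\ forall x, 0 <= bform X x x.
Proof.
have quadE (x : 'cV[R]_n) : (x^T *m untilde X *m x) 0 0 =
    bform X (fun p => (P^T *m x) p 0) (fun p => (P^T *m x) p 0).
  by rewrite -mx_quadE /untilde trmx_mul trmxK !mulmxA.
split=> [[hs hq] | [hs hq]]; last first.
  by split=> [|x]; [exact: untilde_sym | rewrite quadE].
split=> [|y]; first by rewrite -(tildeK X); exact: tilde_sym.
have := hq (P *m \col_p y p); rewrite quadE mulmxA HP mul1mx.
by under [fun p => _]funext => p do rewrite mxE.
Qed.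

Lemma psd_tildeP W : psd W <-> symS (tilde W) /\ forall x, 0 <= bform (tilde W) x x.
Proof. by rewrite -psd_untildeP untildeK. Qed.

End OrthogonalBasis.

Section ExtendedRealLimits.
Context {R : realType}.
Local Open Scope ereal_scope.
Implicit Types (l x : \bar R) (u : nat -> \bar R).

Lemma lee_finlbP l x : (forall r : R, r%:E < l -> r%:E <= x) -> l <= x.
Proof.
case: x => [x||] H; [| by rewrite leey |].
- case: l H => [l||] H; last by rewrite leNye.
    rewrite lee_fin leNgt; apply/negP => xl.
    have := H ((x + l) / 2)%R; rewrite !lte_fin !lee_fin; lra.
  by have := H (x + 1)%R; rewrite ltry lee_fin => /(_ erefl) ?; exfalso; lra.
- case: l H => [l||] H //.
    by have := H (l - 1)%R; rewrite lte_fin leeNy_eq => /(_ ltac:(lra)).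
  by have := H 0%R; rewrite ltry leeNy_eq => /(_ erefl).
Qed.

Lemma limn_einf_ge u l :
  (forall r : R, r%:E < l -> \forall k \near \oo, r%:E <= u k) -> l <= limn_einf u.
Proof.
move=> H; apply: lee_finlbP => r rl; rewrite limn_einf_lim.
apply: lime_ge; first exact: is_cvg_einfs.
have [N _ HN] := H r rl; exists N => // k /= Nk.
by apply: le_ereal_inf_tmp => _ [j /= kj <-]; apply: HN; rewrite /= (leq_trans Nk kj).
Qed.

Lemma limn_esup_le u l :
  (forall r : R, l < r%:E -> \forall k \near \oo, u k <= r%:E) -> limn_esup u <= l.
Proof.
move=> H; rewrite -leeN2 -limn_einfN; apply: limn_einf_ge => r rl.
rewrite lteNr -EFinN in rl; apply: filterS (H _ rl) => k /=.
by rewrite EFinN leeNr.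
Qed.

End ExtendedRealLimits.

Section MatrixConvergence.
Context {R : realType} {n : nat}.

Lemma cvg_sum_ord {T} (F : set_system T) (FF : Filter F) (f : 'I_n -> T -> R)
    (a : 'I_n -> R) :
  (forall i, f i x @[x --> F] --> a i) -> (\sum_i f i x) @[x --> F] --> \sum_i a i.
Proof. by move=> H; apply: (@cvg_big R 'I_n +%R 0 xpredT add_continuous). Qed.

Lemma cvg_mxentry (u : nat -> 'M[R]_n) (W : 'M[R]_n) i j :
  u @ \oo --> W -> (fun k => u k i j) @ \oo --> W i j.
Proof. exact: (continuous_cvg _ (@coord_continuous R n n i j W)). Qed.

Lemma cvg_tilde (P : 'M[R]_n) (u : nat -> 'M[R]_n) (W : 'M[R]_n) i j :
  u @ \oo --> W -> (fun k => tilde P (u k) i j) @ \oo --> tilde P W i j.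
Proof.
move=> uW; rewrite tildeE; under eq_fun do rewrite tildeE.
apply: cvg_sum_ord => p; apply: cvg_sum_ord => q.
apply: cvgMl; apply: cvgMr; exact: cvg_mxentry.
Qed.

Lemma cvg_shrinking_dist {V : normedModType R} (x_ : nat -> V) (x : V) :
  (forall k, `|x_ k - x| < k.+1%:R^-1) -> x_ @ \oo --> x.
Proof.
move=> h; apply/cvgrPdist_lt => _/posnumP[e].
near=> k; rewrite distrC; apply: lt_trans (h k) _.
by near: k; exact: near_infty_natSinv_lt.
Unshelve. all: by end_near.
Qed.

End MatrixConvergence.

Lemma delta_set_in {R : realType} {T} (C : T -> Prop) x : C x -> delta_set (R:=R) C x = 0%E.
Proof. by move=> Cx; rewrite /delta_set asboolT. Qed.

Lemma delta_set_notin {R : realType} {T} (C : T -> Prop) x :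
  ~ C x -> delta_set (R:=R) C x = +oo%E.
Proof. by move=> Cx; rewrite /delta_set asboolF. Qed.

Section QuadOnPattern.
Context {R : realType} {n : nat} (P : 'M[R]_n).
Variables (c : 'I_n -> 'I_n -> R) (Z : 'I_n -> 'I_n -> bool).
Implicit Types (W D V : 'M[R]_n).

Definition pattern_space W := symS W /\ forall i j, Z i j -> tilde P W i j = 0.
Definition wsqsum W := \sum_i \sum_j c i j * tilde P W i j ^+ 2.
Definition wsqsum_deriv W D := 2 * \sum_i \sum_j c i j * tilde P W i j * tilde P D i j.
Definition quad_on W : \bar R := ((wsqsum W)%:E + delta_set pattern_space W)%E.

Lemma wsqsum0 : wsqsum 0 = 0.
Proof.
by rewrite /wsqsum big1 // => i _; rewrite big1 // => j _; rewrite tilde0 mxE expr0n mulr0.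
Qed.

Lemma wsqsumDZ W s D :
  wsqsum (W + s *: D) = wsqsum W + s * wsqsum_deriv W D + s ^+ 2 * wsqsum D.
Proof.
rewrite /wsqsum /wsqsum_deriv tildeD tildeZ !mulr_sumr -!big_split /=.
apply: eq_bigr => i _; rewrite !mulr_sumr -!big_split /=.
by apply: eq_bigr => j _; rewrite addmxE scalemxE; ring.
Qed.

Lemma wsqsum_derivDl W1 W2 D :
  wsqsum_deriv (W1 + W2) D = wsqsum_deriv W1 D + wsqsum_deriv W2 D.
Proof.
rewrite /wsqsum_deriv -mulrDr tildeD -big_split /=; congr (_ * _).
apply: eq_bigr => i _; rewrite -big_split /=.
by apply: eq_bigr => j _; rewrite addmxE; ring.
Qed.

Lemma wsqsum_derivZl a W D : wsqsum_deriv (a *: W) D = a * wsqsum_deriv W D.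
Proof.
rewrite /wsqsum_deriv tildeZ mulrCA; congr (_ * _); rewrite mulr_sumr.
apply: eq_bigr => i _; rewrite mulr_sumr.
by apply: eq_bigr => j _; rewrite scalemxE; ring.
Qed.

Lemma wsqsum_derivNr W D : wsqsum_deriv W (- D) = - wsqsum_deriv W D.
Proof.
rewrite /wsqsum_deriv -mulrN tildeN -sumrN; congr (_ * _).
apply: eq_bigr => i _; rewrite -sumrN.
by apply: eq_bigr => j _; rewrite oppmxE; ring.
Qed.

Lemma pattern_space0 : pattern_space 0.
Proof. by split=> [|i j _]; [exact: symS0 | rewrite tilde0 mxE]. Qed.

Lemma pattern_spaceD W D : pattern_space W -> pattern_space D -> pattern_space (W + D).
Proof.
move=> [sW zW] [sD zD]; split=> [|i j Zij]; first exact: symSD.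
by rewrite tildeD addmxE zW // zD // addr0.
Qed.

Lemma pattern_spaceZ a W : pattern_space W -> pattern_space (a *: W).
Proof.
move=> [sW zW]; split=> [|i j Zij]; first exact: symSZ.
by rewrite tildeZ scalemxE zW // mulr0.
Qed.

Lemma pattern_spaceN {W} : pattern_space W -> pattern_space (- W).
Proof. by rewrite -scaleN1r; exact: pattern_spaceZ. Qed.

Lemma quad_on_in W : pattern_space W -> quad_on W = (wsqsum W)%:E.
Proof. by move=> LW; rewrite /quad_on delta_set_in // adde0. Qed.

Lemma quad_on_notin W : ~ pattern_space W -> quad_on W = +oo%E.
Proof. by move=> LW; rewrite /quad_on delta_set_notin // addey. Qed.

Hypothesis c_ge0 : forall i j, 0 <= c i j.

Lemma wsqsum_ge0 W : 0 <= wsqsum W.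
Proof.
by apply: sumr_ge0 => i _; apply: sumr_ge0 => j _; apply: mulr_ge0 => //; exact: sqr_ge0.
Qed.

Definition quad_on_subgrad W V :=
  pattern_space W /\ symS V /\ forall D, pattern_space D -> frob V D = wsqsum_deriv W D.

Variable q : 'M[R]_n -> \bar R.
Hypothesis q_quad_on : forall W, symS W -> q W = quad_on W.

Lemma pattern_space_fin_num {W} : symS W -> q W \is a fin_num -> pattern_space W.
Proof.
move=> sW; rewrite q_quad_on //.
by case: (pselect (pattern_space W)) => // LW; rewrite quad_on_notin.
Qed.

Lemma reg_subgrad_quad_on_le {W V D} :
  reg_subgrad (@symS R n) (@frob R n) q W V -> pattern_space D ->
  frob V D <= wsqsum_deriv W D.
Proof.
move=> [sW [sV [qW_fin reg]]] LD; have LW := pattern_space_fin_num sW qW_fin.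
have nD := normr_ge0 D; have QD := wsqsum_ge0 D.
have bound e : 0 < e -> frob V D - wsqsum_deriv W D <= e * (`|D| + 1).
  move=> e0; have [d [d0 hd]] := reg e e0.
  pose s := Num.min (d / (`|D| + 1)) (e / (wsqsum D + 1)).
  have s0 : 0 < s by rewrite lt_min !divr_gt0 //; lra.
  have sd : s * `|D| < d.
    have : s <= d / (`|D| + 1) by rewrite ge_min lexx.
    by rewrite ler_pdivlMr; [nra | lra].
  have sQ : s * wsqsum D <= e.
    have : s <= e / (wsqsum D + 1) by rewrite ge_min lexx orbT.
    by rewrite ler_pdivlMr; [nra | lra].
  have sWD : symS (W + s *: D) by apply: symSD => //; apply: symSZ; case: LD.
  have := hd _ sWD; rewrite addrAC subrr add0r normrZ gtr0_norm // => /(_ sd).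
  rewrite !q_quad_on // !quad_on_in //; last by apply: pattern_spaceD => //; apply: pattern_spaceZ.
  rewrite -EFinD lee_fin wsqsumDZ frobZr => ineq.
  suff : s * (frob V D - wsqsum_deriv W D) <= s * (e * (`|D| + 1)) by rewrite ler_pM2l.
  nra.
rewrite -subr_le0; apply/ler_addgt0Pr => e e0; rewrite add0r.
have := bound (e / (`|D| + 1)) ltac:(apply: divr_gt0 => //; lra).
by rewrite mulfVK // gt_eqF //; lra.
Qed.

Lemma reg_subgrad_quad_on {W V} :
  reg_subgrad (@symS R n) (@frob R n) q W V -> quad_on_subgrad W V.
Proof.
move=> hreg; have [sW [sV [qW_fin _]]] := hreg.
split; first exact: pattern_space_fin_num.
split=> // D LD; apply/eqP; rewrite eq_le reg_subgrad_quad_on_le //=.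
have := reg_subgrad_quad_on_le hreg (pattern_spaceN LD).
by rewrite frobNr wsqsum_derivNr lerN2.
Qed.

Lemma quad_on_subgrad_reg {W V} :
  quad_on_subgrad W V -> reg_subgrad (@symS R n) (@frob R n) q W V.
Proof.
move=> [LW [sV dV]]; have sW : symS W by case: LW.
split=> //; split=> //; split; first by rewrite q_quad_on // quad_on_in.
move=> e e0; exists 1; split=> // W' sW' _.
rewrite (q_quad_on _ sW) quad_on_in // (q_quad_on _ sW').
case: (pselect (pattern_space W')) => LW'; last by rewrite quad_on_notin // leey.
have LD : pattern_space (W' - W) by apply: pattern_spaceD => //; apply: pattern_spaceN.
rewrite quad_on_in // -EFinD lee_fin dV //.
have -> : wsqsum W' = wsqsum W + wsqsum_deriv W (W' - W) + wsqsum (W' - W).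
  have eW' : W' = W + 1 *: (W' - W) by rewrite scale1r addrC subrK.
  by rewrite {1}eW' wsqsumDZ expr1n !mul1r.
have := wsqsum_ge0 (W' - W); have : 0 <= e * `|W' - W| by rewrite mulr_ge0 // ltW.
lra.
Qed.

Lemma lim_subgrad_quad_onP W V :
  lim_subgrad (@symS R n) (@frob R n) q W V <-> quad_on_subgrad W V.
Proof.
split=> [[sW [sV [qW_fin [W_ [V_ [WW_ [_ [reg VV_]]]]]]]] | hWV].
  split; first exact: pattern_space_fin_num.
  split=> // D LD.
  have toV : (fun k => frob (V_ k) D) @ \oo --> frob V D.
    rewrite frobE; under eq_fun do rewrite frobE.
    apply: cvg_sum_ord => i; apply: cvg_sum_ord => j.
    by apply: cvgM; [exact: cvg_mxentry | exact: cvg_cst].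
  have toW : (fun k => frob (V_ k) D) @ \oo --> wsqsum_deriv W D.
    have -> : (fun k => frob (V_ k) D) = (fun k => wsqsum_deriv (W_ k) D).
      by apply: funext => k; have [_ [_ ->]] := reg_subgrad_quad_on (reg k).
    apply: cvgM; first exact: cvg_cst.
    apply: cvg_sum_ord => i; apply: cvg_sum_ord => j.
    by apply: cvgM; [apply: cvgM; [exact: cvg_cst | exact: cvg_tilde] | exact: cvg_cst].
  exact: cvg_unique _ toV toW.
have reg := quad_on_subgrad_reg hWV; have [sW [sV [qW_fin _]]] := reg.
split=> //; split=> //; split=> //.
exists (fun=> W), (fun=> V).
by split; [exact: cvg_cst | split; [exact: cvg_cst | split; [| exact: cvg_cst]]].
Qed.

Lemma gen_quad_form_quad_on : gen_quad_form (@symS R n) (@frob R n) q.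
Proof.
split; first by rewrite q_quad_on ?quad_on_in ?wsqsum0 //; [exact: pattern_space0 | exact: symS0].
split.
  apply/lim_subgrad_quad_onP; split; first exact: pattern_space0.
  split=> [|D _]; first exact: symS0.
  rewrite frobC /frob mulmx0 mxtrace0 /wsqsum_deriv big1 ?mulr0 // => i _.
  by rewrite big1 // => j _; rewrite tilde0 mxE mulr0 mul0r.
split.
- move=> W1 V1 W2 V2 /lim_subgrad_quad_onP [L1 [s1 d1]] /lim_subgrad_quad_onP [L2 [s2 d2]].
  apply/lim_subgrad_quad_onP; split; first exact: pattern_spaceD.
  split=> [|D LD]; first exact: symSD.
  by rewrite frobC frobDr !(frobC D) d1 // d2 // wsqsum_derivDl.
- move=> a W V /lim_subgrad_quad_onP [L [s d]]; apply/lim_subgrad_quad_onP.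
  split; first exact: pattern_spaceZ.
  split=> [|D LD]; first exact: symSZ.
  by rewrite frobC frobZr (frobC D) d // wsqsum_derivZl.
Qed.

End QuadOnPattern.

Section WeightedSquareSums.
Context {R : realType} {n : nat} (P : 'M[R]_n).
Implicit Types (c : 'I_n -> 'I_n -> R) (W : 'M[R]_n).

Lemma wsqsum_scale c a W :
  wsqsum P (fun i j => a * c i j) W = a * wsqsum P c W.
Proof.
rewrite /wsqsum mulr_sumr; apply: eq_bigr => i _.
by rewrite mulr_sumr; apply: eq_bigr => j _; rewrite mulrA.
Qed.

Lemma ler_wsqsum c1 c2 W : (forall i j, c1 i j <= c2 i j) -> wsqsum P c1 W <= wsqsum P c2 W.
Proof.
move=> c12; apply: ler_sum => i _; apply: ler_sum => j _.
by apply: ler_wpM2r => //; exact: sqr_ge0.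
Qed.

Lemma wsqsum_ge_term c W i j : (forall i j, 0 <= c i j) ->
  c i j * tilde P W i j ^+ 2 <= wsqsum P c W.
Proof.
move=> c0; have term0 i' j' : 0 <= c i' j' * tilde P W i' j' ^+ 2.
  by rewrite mulr_ge0 // sqr_ge0.
apply: le_trans (ler_sum_term _ j (term0 i)) _.
exact: ler_sum_term _ i (fun i' => sumr_ge0 _ (fun j' _ => term0 i' j')).
Qed.

Lemma cvg_wsqsum c {u_ : nat -> 'M[R]_n} {W} :
  u_ @ \oo --> W -> (fun k => wsqsum P c (u_ k)) @ \oo --> wsqsum P c W.
Proof.
move=> uW; apply: cvg_sum_ord => i; apply: cvg_sum_ord => j.
apply: cvgM; first exact: cvg_cst.
by under eq_fun do rewrite expr2; rewrite expr2; apply: cvgM; exact: cvg_tilde.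
Qed.

Lemma quad_on_halve c (Z : 'I_n -> 'I_n -> bool) W :
  ((2^-1)%:E * quad_on P (fun i j => 2 * c i j)%R Z W)%E = quad_on P c Z W.
Proof.
have [LW|notLW] := pselect (pattern_space P Z W).
  by rewrite !quad_on_in // -EFinM wsqsum_scale mulrA mulVf ?pnatr_eq0 // mul1r.
by rewrite !quad_on_notin // mulr_infty gtr0_sg ?mul1e // invr_gt0.
Qed.

End WeightedSquareSums.

Section SecondSubderivative.
Context {R : realType} {V : normedModType R} {S : set V} {ip : V -> V -> R}.
Context {g : V -> \bar R} {z v w : V}.
Local Open Scope ereal_scope.

Lemma second_subderiv_le (y : \bar R) :
  (forall d : R, (0 < d)%R -> exists t u, (0 < t < d)%R /\ S u /\ (`|u - w| < d)%R /\
     sd_quot ip g z v t u <= y) ->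
  second_subderiv S ip g z v w <= y.
Proof.
move=> near_y; apply: ge_ereal_sup => _ [d /= d0 <-].
have [t [u [td [Su [uw le_y]]]]] := near_y d d0.
by apply: le_trans le_y; apply: ereal_inf_lbound; exists t, u.
Qed.

Lemma second_subderiv_lt_seq {r : \bar R} : second_subderiv S ip g z v w < r ->
  exists (t_ : nat -> R) (u_ : nat -> V),
    [/\ forall k, (0 < t_ k)%R, t_ @ \oo --> 0%R, forall k, S (u_ k), u_ @ \oo --> w
      & forall k, sd_quot ip g z v (t_ k) (u_ k) < r].
Proof.
move=> d2_lt.
have step k : exists tu : R * V, [/\ (0 < tu.1 < k.+1%:R^-1)%R, S tu.2,
    (`|tu.2 - w| < k.+1%:R^-1)%R & sd_quot ip g z v tu.1 tu.2 < r].
  have inf_le : ereal_inf [set y | exists t u, (0 < t < k.+1%:R^-1)%R /\ S u /\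
      (`|u - w| < k.+1%:R^-1)%R /\ y = sd_quot ip g z v t u] <= second_subderiv S ip g z v w.
    by apply: ereal_sup_ubound; exists (k.+1%:R^-1)%R => //=; rewrite invr_gt0 ltr0n.
  have /ereal_inf_lt [_ [t [u [tk [Su [uw ->]]]]] lt_r] := le_lt_trans inf_le d2_lt.
  by exists (t, u).
have [tu tuP] := choice step.
exists (fun k => (tu k).1), (fun k => (tu k).2); split.
- by move=> k; have [/andP[]] := tuP k.
- apply: cvg_shrinking_dist => k; have [/andP[t0 tk] _ _ _] := tuP k.
  by rewrite subr0 gtr0_norm.
- by move=> k; have [] := tuP k.
- by apply: cvg_shrinking_dist => k; have [] := tuP k.
- by move=> k; have [] := tuP k.
Qed.

End SecondSubderivative.

Lemma epi_conv_eq_on {R : realType} {V : normedModType R} {S : set V}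
    {f g : nat -> V -> \bar R} {q : V -> \bar R} :
  (forall k w, S w -> f k w = g k w) -> epi_conv S g q -> epi_conv S f q.
Proof.
move=> fg gq w Sw; have [lb [u_ [Su [uw ub]]]] := gq w Sw.
have fgu (u : nat -> V) : (forall k, S (u k)) -> (fun k => f k (u k)) = (fun k => g k (u k)).
  by move=> Su'; apply: funext => k; exact: fg.
split=> [u Su' uw'|]; first by rewrite fgu //; exact: lb.
by exists u_; rewrite fgu.
Qed.

Section StrictComplementarity.
Context {R : realType} {n : nat} (P : 'M[R]_n) (HP : P^T *m P = 1%:M).
Variables mu nu : 'I_n -> R.
Hypothesis strict_compl : forall i, (0 < mu i /\ nu i = 0) \/ (mu i = 0 /\ nu i < 0).
Implicit Types (t : R) (u W : 'M[R]_n).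

Lemma mu_ge0 i : 0 <= mu i.
Proof. by case: (strict_compl i) => [[]|[]]; lra. Qed.

Lemma nu_le0 i : nu i <= 0.
Proof. by case: (strict_compl i) => [[]|[]]; lra. Qed.

Lemma mu_eq0 i : nu i < 0 -> mu i = 0.
Proof. by case: (strict_compl i) => [[]|[]]; lra. Qed.

Lemma nu_eq0 i : ~~ (nu i < 0) -> nu i = 0.
Proof. by move=> /negP nu_ge0; have := nu_le0 i; lra. Qed.

Definition Zmu := untilde P (diagf mu).
Definition Ynu := untilde P (diagf nu).
Definition curv i j := if (0 < mu i) && (nu j < 0) then - nu j / mu i else 0.
Definition neg_pair i j := (nu i < 0) && (nu j < 0).
Definition d2psd := quad_on P (fun i j => 2 * curv i j) neg_pair.
Definition sdq t u := sd_quot (@frob R n) (@delta_psd R n) Zmu Ynu t u.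
Definition trY u := \sum_p - nu p * tilde P u p p.

Lemma curv_ge0 i j : 0 <= curv i j.
Proof. by rewrite /curv; case: ifP => // /andP[? ?]; apply: divr_ge0; lra. Qed.

Lemma psd_Zmu : psd Zmu.
Proof.
apply/(psd_untildeP P HP); split=> [|x]; first exact: diagf_tr.
rewrite bform_diagf; apply: sumr_ge0 => p _.
by rewrite -mulrA mulr_ge0 ?mu_ge0 // -expr2 sqr_ge0.
Qed.

Lemma sdq_psd t u : 0 < t -> psd (Zmu + t *: u) -> sdq t u = (2 / t * trY u)%:E.
Proof.
move=> t0 psdtu; rewrite /sdq /sd_quot /delta_psd !asboolT //; last exact: psd_Zmu.
have -> : frob Ynu u = - trY u.
  rewrite -(frob_tilde P HP) (tildeK P HP) frob_diagf -sumrN.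
  by apply: eq_bigr => p _; ring.
by rewrite sube0 -EFinN -EFinM; congr (_%:E); field; lra.
Qed.

Lemma sdq_npsd t u : 0 < t -> ~ psd (Zmu + t *: u) -> sdq t u = +oo%E.
Proof.
move=> t0 npsd; rewrite /sdq /sd_quot /delta_psd asboolF // asboolT; last exact: psd_Zmu.
by rewrite sube0 addye // mulyr gtr0_sg ?mul1e // divr_gt0 // exprn_gt0.
Qed.

Lemma psd_perturb {t u} : psd (Zmu + t *: u) ->
  forall x, 0 <= \sum_p mu p * x p ^+ 2 + t * bform (tilde P u) x x.
Proof.
rewrite /Zmu -[u in t *: u](untildeK P HP) -untildeZ -untildeD.
move=> /(psd_untildeP P HP) [_ psdx] x; move: (psdx x).
rewrite bformMD bformMZ bform_diagf.
by under eq_bigr => p _ do rewrite -mulrA -expr2.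
Qed.

Lemma psd_perturb_neg_pair {t u j j'} : 0 < t -> symS u -> psd (Zmu + t *: u) ->
  nu j < 0 -> nu j' < 0 -> 2 * `|tilde P u j j'| <= tilde P u j j + tilde P u j' j'.
Proof.
move=> t0 su psdtu nuj nuj'.
have U_sym := symS_entry (tilde_sym P su) j j'.
have quad s : 0 <= tilde P u j j + 2 * s * tilde P u j j' + s ^+ 2 * tilde P u j' j'.
  have := psd_perturb psdtu (fun p => basisf j p + s * basisf j' p).
  have -> : \sum_p mu p * (basisf j p + s * basisf j' p) ^+ 2 = 0.
    apply: big1 => p _; rewrite /basisf.
    have [->|pj] := eqVneq p j; first by rewrite mu_eq0 // mul0r.
    have [->|pj'] := eqVneq p j'; first by rewrite mu_eq0 // mul0r.
    by rewrite mulr0 addr0 expr0n mulr0.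
  rewrite add0r bformDl !bformDr !bformZl !bformZr !bform_basis U_sym pmulr_rge0 //.
  by move=> ?; nra.
have := quad 1; have := quad (-1).
by case: (lerP 0 (tilde P u j j')) => [/ger0_norm | /ltr0_norm] ->; lra.
Qed.

Lemma psd_perturb_neg_diag {t u j} : 0 < t -> symS u -> psd (Zmu + t *: u) ->
  nu j < 0 -> 0 <= tilde P u j j.
Proof.
move=> t0 su psdtu nuj.
by have := psd_perturb_neg_pair t0 su psdtu nuj nuj; have := normr_ge0 (tilde P u j j); lra.
Qed.

Definition scol u j p := if 0 < mu p then tilde P u p j / mu p else 0.
Definition schur_lin u j := \sum_p tilde P u p j * scol u j p.
Definition schur_quad u j := bform (tilde P u) (scol u j) (scol u j).

(* Testing positivity on [e_j - t * scol u j] eliminates the alpha-gamma block. *)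
Lemma psd_perturb_schur {t u j} : 0 < t -> symS u -> psd (Zmu + t *: u) -> nu j < 0 ->
  t * schur_lin u j - t ^+ 2 * schur_quad u j <= tilde P u j j.
Proof.
move=> t0 su psdtu nuj.
have U_sym := symS_entry (tilde_sym P su).
have := psd_perturb psdtu (fun p => basisf j p + (- t) * scol u j p).
have -> : \sum_p mu p * (basisf j p + - t * scol u j p) ^+ 2 = t ^+ 2 * schur_lin u j.
  rewrite /schur_lin mulr_sumr; apply: eq_bigr => p _; rewrite /basisf /scol.
  have [->|pj] := eqVneq p j; first by rewrite mu_eq0 // ltxx !mulr0 mul0r.
  rewrite add0r; case: ifP => mup; last by rewrite !mulr0 expr0n mulr0.
  by field; rewrite gt_eqF.
rewrite bformDl !bformDr !bformZl !bformZr bform_basis -/(schur_quad u j).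
have -> : bform (tilde P u) (basisf j) (scol u j) = schur_lin u j.
  by rewrite bform_basisl; apply: eq_bigr => p _; rewrite U_sym.
have -> : bform (tilde P u) (scol u j) (basisf j) = schur_lin u j.
  by rewrite bform_basisr; apply: eq_bigr => p _; rewrite mulrC.
set S := schur_lin u j; set Q := schur_quad u j; set U := tilde P u j j.
have -> : t ^+ 2 * S + t * (U + - t * S + (- t * S + - t * (- t * Q))) =
  t * (U - (t * S - t ^+ 2 * Q)) by ring.
by rewrite pmulr_rge0 // subr_ge0.
Qed.

Lemma trY_term_ge0 {t u} p : 0 < t -> symS u -> psd (Zmu + t *: u) ->
  0 <= - nu p * tilde P u p p.
Proof.
move=> t0 su psdtu; have [nup|/nu_eq0 ->] := boolP (nu p < 0); last by rewrite oppr0 mul0r.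
by rewrite mulr_ge0 ?(psd_perturb_neg_diag t0 su psdtu) //; lra.
Qed.

Lemma trY_ge_neg_pair {t u j j'} : 0 < t -> symS u -> psd (Zmu + t *: u) ->
  nu j < 0 -> nu j' < 0 -> Num.min (- nu j) (- nu j') * `|tilde P u j j'| <= trY u.
Proof.
move=> t0 su psdtu nuj nuj'; set m := Num.min _ _.
have mj : m <= - nu j by rewrite ge_min lexx.
have mj' : m <= - nu j' by rewrite ge_min lexx orbT.
have m0 : 0 <= m by rewrite le_min; apply/andP; split; lra.
have Ujj := psd_perturb_neg_diag t0 su psdtu nuj.
have Uj'j' := psd_perturb_neg_diag t0 su psdtu nuj'.
have terms p := trY_term_ge0 p t0 su psdtu.
rewrite /trY; have [<-|jj'] := eqVneq j j'.
  apply: le_trans _ (ler_sum_term _ j terms); rewrite ger0_norm //.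
  exact: ler_wpM2r.
apply: le_trans _ (ler_sum_pair _ _ _ jj' terms).
have := psd_perturb_neg_pair t0 su psdtu nuj nuj'.
have := normr_ge0 (tilde P u j j'); have := ler_wpM2r Ujj mj; have := ler_wpM2r Uj'j' mj'.
nra.
Qed.

Lemma trYD u1 u2 : trY (u1 + u2) = trY u1 + trY u2.
Proof. by rewrite /trY -big_split; apply: eq_bigr => p _; rewrite tildeD addmxE mulrDr. Qed.

Lemma trYZ a u : trY (a *: u) = a * trY u.
Proof.
by rewrite /trY mulr_sumr; apply: eq_bigr => p _; rewrite tildeZ scalemxE mulrCA.
Qed.

Lemma trY_pattern W : pattern_space P neg_pair W -> trY W = 0.
Proof.
move=> [_ zW]; apply: big1 => p _.
have [nup|/nu_eq0 ->] := boolP (nu p < 0); last by rewrite oppr0 mul0r.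
by rewrite zW ?mulr0 // /neg_pair nup.
Qed.

(* For [W] in the pattern space, [F^T D + D F = tilde W] with [D = diagf mu],
   so [(1 + t F)^T D (1 + t F) = D + t tilde W + t^2 F^T D F] stays psd. *)
Definition rec_factor (U : 'M[R]_n) : 'M[R]_n := \matrix_(p, q)
  if 0 < mu p then (if nu q < 0 then U p q / mu p else U p q / (2 * mu p)) else 0.
Definition rec_corr W :=
  untilde P ((rec_factor (tilde P W))^T *m diagf mu *m rec_factor (tilde P W)).

Lemma rec_factor_sym_part W : pattern_space P neg_pair W ->
  (rec_factor (tilde P W))^T *m diagf mu + diagf mu *m rec_factor (tilde P W) = tilde P W.
Proof.
move=> [sW zW]; have U_sym := symS_entry (tilde_sym P sW).
move: (tilde P W) U_sym zW => U U_sym zU.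
apply/matrixP => p q; rewrite mul_diag_mx mul_mx_diag !mxE.
case: (strict_compl p) => [[mup nup]|[mup nup]]; case: (strict_compl q) => [[muq nuq]|[muq nuq]].
- rewrite mup muq nup nuq ltxx /= U_sym; field.
  by rewrite !gt_eqF.
- by rewrite mup nuq muq ltxx /=; field; rewrite gt_eqF.
- by rewrite muq nup mup ltxx /= U_sym; field; rewrite gt_eqF.
- by rewrite mup muq ltxx /= zU ?mulr0 ?addr0 // /neg_pair nup nuq.
Qed.

Lemma congr_diag_expand (F : 'M[R]_n) t :
  (1%:M + t *: F)^T *m diagf mu *m (1%:M + t *: F) =
  diagf mu + t *: (F^T *m diagf mu + diagf mu *m F) + t ^+ 2 *: (F^T *m diagf mu *m F).
Proof.
have -> : (1%:M + t *: F)^T = 1%:M + t *: F^T.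
  by apply/matrixP => i j; rewrite !mxE eq_sym.
rewrite mulmxDl mul1mx !mulmxDr mulmx1.
by rewrite mulmxDl -!scalemxAr -!scalemxAl scalerA -expr2 scalerDr !addrA.
Qed.

Lemma psd_congr_diag (F : 'M[R]_n) : psd (untilde P (F^T *m diagf mu *m F)).
Proof.
apply/(psd_untildeP P HP); split=> [|x].
  by rewrite /symS /= !trmx_mul trmxK diagf_tr mulmxA.
pose y : 'cV[R]_n := \col_k x k.
have -> : x = (fun p => y p 0) by apply: funext => p; rewrite mxE.
rewrite -mx_quadE.
have -> : y^T *m (F^T *m diagf mu *m F) *m y = (F *m y)^T *m diagf mu *m (F *m y).
  by rewrite trmx_mul !mulmxA.
rewrite mx_quadE bform_diagf; apply: sumr_ge0 => p _.
by rewrite -mulrA mulr_ge0 ?mu_ge0 // -expr2 sqr_ge0.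
Qed.

Lemma psd_recovery t W : pattern_space P neg_pair W ->
  psd (Zmu + t *: (W + t *: rec_corr W)).
Proof.
move=> LW; have -> : Zmu + t *: (W + t *: rec_corr W) =
    untilde P ((1%:M + t *: rec_factor (tilde P W))^T *m diagf mu *m
               (1%:M + t *: rec_factor (tilde P W))).
  rewrite congr_diag_expand rec_factor_sym_part // /Zmu /rec_corr.
  by rewrite !untildeD !untildeZ (untildeK P HP) scalerDr scalerA -expr2 addrA.
exact: psd_congr_diag.
Qed.

Lemma trY_rec_corr W : trY (rec_corr W) = wsqsum P curv W.
Proof.
rewrite /trY /rec_corr (tildeK P HP) /wsqsum; move: (tilde P W) => U.
under eq_bigr => j _ do rewrite mul_mx_diag !mxE mulr_sumr.
rewrite exchange_big; apply: eq_bigr => p _; apply: eq_bigr => j _.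
rewrite !mxE /curv; case: (boolP (0 < mu p)) => mup /=; last by rewrite !mulr0 mul0r.
have [nuj|/nu_eq0 ->] := boolP (nu j < 0); last by rewrite !mul0r oppr0 mul0r.
by field; rewrite gt_eqF.
Qed.

Lemma sdq_recovery t W : 0 < t -> pattern_space P neg_pair W ->
  sdq t (W + t *: rec_corr W) = (wsqsum P (fun i j => 2 * curv i j) W)%:E.
Proof.
move=> t0 LW; rewrite sdq_psd //; last exact: psd_recovery.
rewrite trYD trYZ trY_pattern // trY_rec_corr wsqsum_scale add0r.
by congr (_%:E); field; lra.
Qed.

Definition sdq_lbound t u := wsqsum P (fun i j => 2 * curv i j) u -
  2 * t * \sum_j (if nu j < 0 then - nu j * schur_quad u j else 0).

Lemma wsqsum_schur u : wsqsum P (fun i j => 2 * curv i j) u =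
  \sum_j (if nu j < 0 then 2 * - nu j * schur_lin u j else 0).
Proof.
rewrite /wsqsum exchange_big; apply: eq_bigr => j _.
case: ifP => nuj; last by apply: big1 => p _; rewrite /curv nuj andbF !mulr0 mul0r.
rewrite /schur_lin mulr_sumr; apply: eq_bigr => p _; rewrite /curv /scol nuj andbT.
by case: ifP => mup; [field; rewrite gt_eqF | rewrite !mulr0 mul0r].
Qed.

Lemma sdq_lbound_le t u : 0 < t -> symS u -> psd (Zmu + t *: u) ->
  sdq_lbound t u <= 2 / t * trY u.
Proof.
move=> t0 su psdtu; rewrite /sdq_lbound wsqsum_schur /trY !mulr_sumr -sumrB.
apply: ler_sum => j _; case: ifP => [nuj|/negbT/nu_eq0 ->]; last first.
  by rewrite oppr0 !mul0r !mulr0 subr0.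
have schur := psd_perturb_schur t0 su psdtu nuj.
have c0 : 0 <= 2 * - nu j / t by apply: divr_ge0; lra.
have := ler_wpM2l c0 schur.
have -> : 2 * - nu j / t * (t * schur_lin u j - t ^+ 2 * schur_quad u j) =
  2 * - nu j * schur_lin u j - 2 * t * (- nu j * schur_quad u j) by field; lra.
suff -> : 2 / t * (- nu j * tilde P u j j) = 2 * - nu j / t * tilde P u j j by [].
by ring.
Qed.

Lemma sdq_ge_lbound {t u} : 0 < t -> symS u -> ((sdq_lbound t u)%:E <= sdq t u)%E.
Proof.
move=> t0 su; case: (pselect (psd (Zmu + t *: u))) => [psdtu|npsd].
  by rewrite sdq_psd // lee_fin sdq_lbound_le.
by rewrite sdq_npsd // leey.
Qed.

Lemma sdq_ge_trY_bound {t u a} : 0 < t -> (psd (Zmu + t *: u) -> a <= trY u) ->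
  ((2 * a / t)%:E <= sdq t u)%E.
Proof.
move=> t0 a_le; case: (pselect (psd (Zmu + t *: u))) => [psdtu|npsd].
  by rewrite sdq_psd // lee_fin mulrAC ler_wpM2l ?a_le // divr_ge0 // ltW.
by rewrite sdq_npsd // leey.
Qed.

Lemma cvg_sdq_lbound {t_ : nat -> R} {u_ : nat -> 'M[R]_n} {W} :
  t_ @ \oo --> 0 -> u_ @ \oo --> W ->
  (fun k => sdq_lbound (t_ k) (u_ k)) @ \oo --> wsqsum P (fun i j => 2 * curv i j) W.
Proof.
move=> t_0 uW; have -> : wsqsum P (fun i j => 2 * curv i j) W =
    wsqsum P (fun i j => 2 * curv i j) W -
    2 * 0 * \sum_j (if nu j < 0 then - nu j * schur_quad W j else 0).
  by rewrite mulr0 mul0r subr0.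
apply: cvgB; first exact: cvg_wsqsum.
apply: cvgM; first by apply: cvgM; [exact: cvg_cst | exact: t_0].
apply: cvg_sum_ord => j; case: ifP => _; last exact: cvg_cst.
apply: cvgM; first exact: cvg_cst.
have scol_cvg p : (fun k => scol (u_ k) j p) @ \oo --> scol W j p.
  rewrite /scol; case: ifP => _; last exact: cvg_cst.
  by apply: cvgM; [exact: cvg_tilde | exact: cvg_cst].
apply: cvg_sum_ord => p; apply: cvg_sum_ord => q.
by apply: cvgM; [apply: cvgM; [exact: scol_cvg | exact: cvg_tilde] | exact: scol_cvg].
Qed.

Lemma trY_bound_off_pattern {t_ : nat -> R} {u_ : nat -> 'M[R]_n} {W} :
  (forall k, 0 < t_ k) -> (forall k, symS (u_ k)) -> u_ @ \oo --> W ->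
  symS W -> ~ pattern_space P neg_pair W ->
  exists2 a, 0 < a & \forall k \near \oo, psd (Zmu + t_ k *: u_ k) -> a <= trY (u_ k).
Proof.
move=> t0 su uW sW notLW.
have [j [j' [njj' Wjj']]] : exists j j', neg_pair j j' /\ tilde P W j j' != 0.
  apply: contrapT => none; apply: notLW; split=> // j j' njj'.
  by apply/eqP; apply: contrapT => Wjj'; apply: none; exists j, j'; split=> //; apply/negP.
move: njj' => /andP[nuj nuj']; set m := Num.min (- nu j) (- nu j').
have m0 : 0 < m by rewrite lt_min; apply/andP; split; lra.
have w0 : 0 < `|tilde P W j j'| by rewrite normr_gt0.
exists (m * (`|tilde P W j j'| / 2)); first by rewrite mulr_gt0 // divr_gt0.
have cvg_abs : (fun k => `|tilde P (u_ k) j j'|) @ \oo --> `|tilde P W j j'|.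
  by apply: cvg_norm; exact: cvg_tilde.
near=> k => psdk.
apply: le_trans (trY_ge_neg_pair (t0 k) (su k) psdk nuj nuj').
apply: ler_wpM2l; [exact: ltW | apply: ltW].
by near: k; apply: (cvgr_gt _ cvg_abs); rewrite ltr_pdivrMr // ltr_pMr // ltr1n.
Unshelve. all: by end_near.
Qed.

Lemma liminf_sdq_ge {t_ : nat -> R} {u_ : nat -> 'M[R]_n} {W} :
  (forall k, 0 < t_ k) -> t_ @ \oo --> 0 -> (forall k, symS (u_ k)) -> u_ @ \oo --> W ->
  symS W -> (d2psd W <= limn_einf (fun k => sdq (t_ k) (u_ k)))%E.
Proof.
move=> t0 t_0 su uW sW; apply: limn_einf_ge => r r_lt.
case: (pselect (pattern_space P neg_pair W)) => [LW|notLW].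
  move: r_lt; rewrite /d2psd quad_on_in // lte_fin => r_lt.
  near=> k.
  have lb : r < sdq_lbound (t_ k) (u_ k).
    by near: k; exact: (cvgr_gt _ (cvg_sdq_lbound t_0 uW) _ r_lt).
  by apply: le_trans _ (sdq_ge_lbound (t0 k) (su k)); rewrite lee_fin ltW.
have [a a0 a_le] := trY_bound_off_pattern t0 su uW sW notLW.
have ra0 : 0 < 2 * a / (`|r| + 1) by rewrite !divr_gt0 //; have := normr_ge0 r; lra.
near=> k.
have a_le_k : psd (Zmu + t_ k *: u_ k) -> a <= trY (u_ k) by near: k.
apply: le_trans _ (sdq_ge_trY_bound (t0 k) a_le_k).
have tk : t_ k < 2 * a / (`|r| + 1) by near: k; exact: (cvgr_lt _ t_0 _ ra0).
rewrite lee_fin ler_pdivlMr //.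
move: tk; rewrite ltr_pdivlMr; last by have := normr_ge0 r; lra.
by have := ler_norm r; have := t0 k; have := normr_ge0 r; nra.
Unshelve. all: by end_near.
Qed.

Lemma rec_corr_sym W : symS (rec_corr W).
Proof. by apply: untilde_sym; rewrite /symS /= !trmx_mul trmxK diagf_tr mulmxA. Qed.

Lemma second_subderiv_psd W : symS W ->
  second_subderiv (@symS R n) (@frob R n) (@delta_psd R n) Zmu Ynu W = d2psd W.
Proof.
move=> sW; apply/eqP; rewrite eq_le; apply/andP; split.
  apply: second_subderiv_le => d d0.
  have [LW|notLW] := pselect (pattern_space P neg_pair W); last first.
    exists (d / 2), W; rewrite /d2psd quad_on_notin // leey subrr normr0.
    by split; [apply/andP; split; [exact: divr_gt0 | lra] | do !split].
  have E0 := normr_ge0 (rec_corr W).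
  pose t := Num.min (d / 2) (d / (2 * (`|rec_corr W| + 1))).
  have t0 : 0 < t by rewrite lt_min; apply/andP; split; apply: divr_gt0 => //; lra.
  have t_d2 : t <= d / 2 by rewrite ge_min lexx.
  have tE : t * `|rec_corr W| < d.
    have : t <= d / (2 * (`|rec_corr W| + 1)) by rewrite ge_min lexx orbT.
    by rewrite ler_pdivlMr; [nra | lra].
  exists t, (W + t *: rec_corr W); split; first by rewrite t0 /=; lra.
  split; first by apply: symSD => //; apply: symSZ; exact: rec_corr_sym.
  split; first by rewrite addrAC subrr add0r normrZ gtr0_norm.
  by rewrite -/(sdq _ _) sdq_recovery // /d2psd quad_on_in.
apply: lee_finlbP => r r_lt; rewrite leNgt; apply/negP => d2_lt.
have [t_ [u_ [t0 t_0 su uW lt_r]]] := second_subderiv_lt_seq d2_lt.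
have liminf_ge := liminf_sdq_ge t0 t_0 su uW sW.
have limsup_le : (limn_esup (fun k => sdq (t_ k) (u_ k)) <= r%:E)%E.
  apply: limn_esup_le => r' r_r'; near=> k.
  exact: ltW (lt_trans (lt_r k) r_r').
have := le_trans liminf_ge (le_trans (limn_einf_sup _) limsup_le).
by rewrite leNgt r_lt.
Unshelve. all: by end_near.
Qed.

Lemma twice_epi_diff_psd :
  twice_epi_diff (@symS R n) (@frob R n) (@delta_psd R n) Zmu Ynu.
Proof.
split; first by rewrite /delta_psd asboolT //; exact: psd_Zmu.
move=> t_ t0 t_0 W sW; split.
  by move=> u_ su uW; rewrite second_subderiv_psd //; exact: liminf_sdq_ge.
rewrite second_subderiv_psd //.
have [LW|notLW] := pselect (pattern_space P neg_pair W); last first.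
  by exists (fun=> W); split=> //; split; [exact: cvg_cst | rewrite /d2psd quad_on_notin // leey].
exists (fun k => W + t_ k *: rec_corr W); split.
  by move=> k; apply: symSD => //; apply: symSZ; exact: rec_corr_sym.
split.
  rewrite -[X in _ --> X]addr0 -(scale0r (rec_corr W)).
  by apply: cvgD; [exact: cvg_cst | apply: cvgZ; [exact: t_0 | exact: cvg_cst]].
apply: limn_esup_le => r; rewrite /d2psd quad_on_in // => r_gt; near=> k.
by rewrite -/(sdq _ _) sdq_recovery // ltW.
Unshelve. all: by end_near.
Qed.

Lemma gen_twice_diff_psd :
  gen_twice_diff (@symS R n) (@frob R n) (@delta_psd R n) Zmu Ynu.
Proof.
split; first exact: twice_epi_diff_psd.
apply: (gen_quad_form_quad_on P (fun i j => 2 * curv i j) neg_pair).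
  by move=> i j; rewrite mulr_ge0 // curv_ge0.
exact: second_subderiv_psd.
Qed.

End StrictComplementarity.

Lemma penrose_uniq {R : realType} {n} (A X1 X2 : 'M[R]_n) :
  penrose A X1 -> penrose A X2 -> X1 = X2.
Proof.
move=> [AXA1 [XAX1 [AXs1 XAs1]]] [AXA2 [XAX2 [AXs2 XAs2]]].
have A_tr : A^T = A^T *m X2^T *m A^T by rewrite -{1}AXA2 !trmx_mul mulmxA.
have AX : A *m X1 = A *m X2.
  have AX1 : A *m X1 = X1^T *m A^T by rewrite -trmx_mul AXs1.
  have : A *m X1 = (X1^T *m A^T) *m (X2^T *m A^T) by rewrite {1}AX1 {1}A_tr !mulmxA.
  rewrite -[X1^T *m A^T]trmx_mul -[X2^T *m A^T]trmx_mul AXs1 AXs2 => ->.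
  by rewrite mulmxA AXA1.
have XA : X1 *m A = X2 *m A.
  have XA1 : X1 *m A = A^T *m X1^T by rewrite -trmx_mul XAs1.
  have : X1 *m A = (A^T *m X2^T) *m (A^T *m X1^T) by rewrite {1}XA1 {1}A_tr !mulmxA.
  rewrite -[A^T *m X2^T]trmx_mul -[A^T *m X1^T]trmx_mul XAs1 XAs2 => ->.
  by rewrite -!mulmxA (mulmxA A) AXA1.
by rewrite -XAX1 -mulmxA AX mulmxA XA XAX2.
Qed.

Section SpectralSplit.
Context {R : realType} {n : nat} (lam : 'I_n -> R).

Definition lam_pos i := if 0 < lam i then lam i else 0.
Definition lam_neg i := if lam i < 0 then lam i else 0.
Definition lam_pos_inv i := if 0 < lam i then (lam i)^-1 else 0.

(* Complementarity in a basis diagonalizing [G + Y]: the entrywise products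
   [G i j * Y i j] are all nonpositive and sum to zero. *)
Lemma complementary_diag_split (G Y : 'M[R]_n) :
  (forall i, 0 <= G i i) -> (forall i, Y i i <= 0) -> G + Y = diagf lam ->
  \sum_i \sum_j G i j * Y i j = 0 -> G = diagf lam_pos /\ Y = diagf lam_neg.
Proof.
move=> G0 Y0 GY sum0.
have GYE i j : G i j + Y i j = if i == j then lam i else 0.
  by rewrite -addmxE GY diagfE.
have off i j : i != j -> Y i j = - G i j.
  by move=> ij; have := GYE i j; rewrite (negbTE ij); lra.
have prod_le0 i j : G i j * Y i j <= 0.
  have [<-|ij] := eqVneq i j; first by rewrite mulr_ge0_le0.
  by rewrite off // mulrN oppr_le0 -expr2 sqr_ge0.
have prod0 i j : G i j * Y i j = 0.
  have nsum : \sum_i \sum_j - (G i j * Y i j) = 0.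
    transitivity (- \sum_i \sum_j G i j * Y i j); last by rewrite sum0 oppr0.
    by rewrite -sumrN; apply: eq_bigr => i' _; rewrite sumrN.
  have terms_ge0 i' j' : 0 <= - (G i' j' * Y i' j') by rewrite oppr_ge0.
  have := psumr_eq0P (fun i' _ => sumr_ge0 _ (fun j' _ => terms_ge0 i' j')) nsum (i:=i) erefl.
  by move=> /psumr_eq0P -/(_ (fun j' _ => terms_ge0 i j') j erefl); lra.
have offG i j : i != j -> G i j = 0.
  by move=> ij; move: (prod0 i j); rewrite off // mulrN => /eqP; rewrite oppr_eq0 mulf_eq0 orbb => /eqP.
have GYii i : G i i + Y i i = lam i by rewrite GYE eqxx.
have Gii_Yii i : G i i = 0 \/ Y i i = 0.
  by have /eqP := prod0 i i; rewrite mulf_eq0 => /orP[] /eqP; [left | right].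
split; apply/matrixP => i j; rewrite diagfE.
- have [<-|ij] := eqVneq i j; last exact: offG.
  have := GYii i; have := G0 i; have := Y0 i; have := Gii_Yii i.
  by rewrite /lam_pos; case: (ltrP 0 (lam i)) => /= lam_i; lra.
- have [<-|ij] := eqVneq i j; last by rewrite off // offG // oppr0.
  have := GYii i; have := G0 i; have := Y0 i; have := Gii_Yii i.
  by rewrite /lam_neg; case: (ltrP (lam i) 0) => /= lam_i; lra.
Qed.

Variables (P : 'M[R]_n) (HP : P^T *m P = 1%:M).

Lemma complementary_decomp {G Y : 'M[R]_n} : psd G -> nsd Y -> frob G Y = 0 ->
  G + Y = untilde P (diagf lam) ->
  G = untilde P (diagf lam_pos) /\ Y = untilde P (diagf lam_neg).
Proof.
move=> psdG nsdY GY0 GYlam.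
have [_ Gq] := (psd_tildeP P HP G).1 psdG.
have [_ Yq] := (psd_tildeP P HP (- Y)).1 nsdY.
have [Gd Yd] : tilde P G = diagf lam_pos /\ tilde P Y = diagf lam_neg.
  apply: complementary_diag_split.
  - by move=> i; have := Gq (basisf i); rewrite bform_basis.
  - by move=> i; have := Yq (basisf i); rewrite bform_basis tildeN oppmxE oppr_ge0.
  - by rewrite -tildeD GYlam (tildeK P HP).
  - by rewrite -frobE (frob_tilde P HP).
by rewrite -(untildeK P HP G) -(untildeK P HP Y) Gd Yd.
Qed.

Lemma mp_pinv_diag : mp_pinv (untilde P (diagf lam_pos)) = untilde P (diagf lam_pos_inv).
Proof.
have pen : penrose (untilde P (diagf lam_pos)) (untilde P (diagf lam_pos_inv)).
  have untilde_diag_sym mu : (untilde P (diagf mu))^T = untilde P (diagf mu).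
    exact: untilde_sym (diagf_tr mu).
  rewrite /penrose !(untildeM P HP) !diagf_mul !untilde_diag_sym.
  split; [|split; [|by split]]; congr (untilde P (diagf _)); apply: funext => i;
    rewrite /lam_pos /lam_pos_inv; by case: ifP => lam0; [field; rewrite gt_eqF | ring].
apply: (penrose_uniq _ _ _ _ pen).
exact: (xgetPex 0 (ex_intro _ _ pen)).
Qed.

Lemma Upsilon_diag H : symS H ->
  - 2^-1 * Upsilon (untilde P (diagf lam_pos)) (untilde P (diagf lam_neg)) H =
  \sum_(i < n | 0 < lam i) \sum_(j < n | lam j < 0)
     (- lam j / lam i) * ((P^T *m H *m P) i j) ^+ 2.
Proof.
move=> sH; have U_sym := symS_entry (tilde_sym P sH).
rewrite /Upsilon mp_pinv_diag -(frob_tilde P HP) (tildeK P HP (diagf lam_neg)).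
rewrite 2!(tildeM P HP) (tildeK P HP (diagf lam_pos_inv)) frob_diagf -[P^T *m H *m P]/(tilde P H); move: (tilde P H) U_sym => U U_sym.
have -> : \sum_i lam_neg i * (U *m diagf lam_pos_inv *m U) i i =
    \sum_i \sum_k lam_neg i * (U i k * lam_pos_inv k * U k i).
  apply: eq_bigr => i _; rewrite mul_mx_diag mxE mulr_sumr.
  by apply: eq_bigr => k _; rewrite !mxE.
rewrite mulrA mulNr mulVf ?pnatr_eq0 // mulN1r [in LHS]exchange_big -sumrN [RHS]big_mkcond.
apply: eq_bigr => i _; rewrite -sumrN.
case: ifP => lam_i; last by apply: big1 => j _; rewrite /lam_pos_inv lam_i !(mulr0, mul0r, oppr0).
rewrite [RHS]big_mkcond; apply: eq_bigr => j _; rewrite /lam_neg /lam_pos_inv lam_i U_sym.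
by case: ifP => lam_j; [field; rewrite gt_eqF | rewrite !(mulr0, mul0r, oppr0)].
Qed.

End SpectralSplit.

Section Approximation.
Context {R : realType} {n : nat} (P : 'M[R]_n) (HP : P^T *m P = 1%:M) (lam : 'I_n -> R).
Implicit Types (W u : 'M[R]_n).

(* Moving the zero eigenvalues of [G xb + Yb] to [1/(k+1)] in the [G]-part
   restores strict complementarity. *)
Definition lam_approx (k : nat) i : R :=
  if 0 < lam i then lam i else if lam i == 0 then k.+1%:R^-1 else 0.
Definition aff_pat i j := (lam i <= 0) && (lam j < 0).
Definition q_approx k := quad_on P (curv (lam_approx k) (lam_neg lam)) (neg_pair (lam_neg lam)).
Definition q_lim := quad_on P (curv (lam_pos lam) (lam_neg lam)) aff_pat.

Lemma lam_neg_lt0 j : (lam_neg lam j < 0) = (lam j < 0).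
Proof. by rewrite /lam_neg; case: ifP => // /negbT; rewrite ltxx. Qed.

Lemma lam_negE j : lam j < 0 -> lam_neg lam j = lam j.
Proof. by rewrite /lam_neg => ->. Qed.

Lemma strict_compl_approx k i :
  (0 < lam_approx k i /\ lam_neg lam i = 0) \/ (lam_approx k i = 0 /\ lam_neg lam i < 0).
Proof.
rewrite /lam_approx /lam_neg; case: (ltgtP (lam i) 0) => lam_i /=.
- by right.
- by left.
- by left; rewrite invr_gt0 ltr0n.
Qed.

Lemma curv_lim_le_approx k i j :
  curv (lam_pos lam) (lam_neg lam) i j <= curv (lam_approx k) (lam_neg lam) i j.
Proof.
have [lam_i|lam_i] := ltrP 0 (lam i).
  by rewrite /curv /lam_pos /lam_approx lam_i.
have -> : curv (lam_pos lam) (lam_neg lam) i j = 0.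
  by rewrite /curv /lam_pos (negbTE (_ : ~~ (0 < lam i))) ?ltxx // -leNgt.
exact: curv_ge0.
Qed.

Lemma curv_approx_beta k i j : lam i = 0 -> lam j < 0 ->
  curv (lam_approx k) (lam_neg lam) i j = - lam j * k.+1%:R.
Proof.
move=> lam_i lam_j; rewrite /curv /lam_approx lam_neg_lt0 lam_i ltxx eqxx lam_j lam_negE //.
by rewrite invr_gt0 ltr0n /= invrK.
Qed.

Lemma pattern_aff_neg_pair W :
  pattern_space P aff_pat W -> pattern_space P (neg_pair (lam_neg lam)) W.
Proof.
move=> [sW zW]; split=> // i j; rewrite /neg_pair !lam_neg_lt0 => /andP[lam_i lam_j].
by apply: zW; rewrite /aff_pat lam_j ltW.
Qed.

Lemma wsqsum_approx_aff k W : pattern_space P aff_pat W ->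
  wsqsum P (curv (lam_approx k) (lam_neg lam)) W = wsqsum P (curv (lam_pos lam) (lam_neg lam)) W.
Proof.
move=> [_ zW]; apply: eq_bigr => i _; apply: eq_bigr => j _.
rewrite /curv /lam_approx /lam_pos lam_neg_lt0.
case: (ltrP 0 (lam i)) => lam_i /=; first by [].
have [lam_j|_] := boolP (lam j < 0); last by rewrite !andbF.
by rewrite zW ?expr0n ?mulr0 // /aff_pat lam_i.
Qed.

Lemma q_approx_ge k u : ((wsqsum P (curv (lam_pos lam) (lam_neg lam)) u)%:E <= q_approx k u)%E.
Proof.
have [Lu|notLu] := pselect (pattern_space P (neg_pair (lam_neg lam)) u).
  by rewrite /q_approx quad_on_in // lee_fin ler_wsqsum // => i j; exact: curv_lim_le_approx.
by rewrite /q_approx quad_on_notin // leey.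
Qed.

Lemma q_approx_eq_aff k W : pattern_space P aff_pat W -> q_approx k W = q_lim W.
Proof.
move=> LW; rewrite /q_approx /q_lim !quad_on_in ?wsqsum_approx_aff //.
exact: pattern_aff_neg_pair.
Qed.

(* Off the affine hull an entry in the beta-gamma block of [tilde W] is charged
   with the weight [- lam j * k.+1], which blows up, while an entry in the
   gamma-gamma block is excluded outright. *)
Lemma q_approx_off_aff {u_ : nat -> 'M[R]_n} {W} :
  u_ @ \oo --> W -> ~ pattern_space P aff_pat W -> symS W ->
  forall r : R, \forall k \near \oo, (r%:E <= q_approx k (u_ k))%E.
Proof.
move=> uW notLW sW r.
have [i [j [aff_ij Wij]]] : exists i j, aff_pat i j /\ tilde P W i j != 0.
  apply: contrapT => none; apply: notLW; split=> // i j aff_ij.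
  by apply/eqP; apply: contrapT => Wij; apply: none; exists i, j; split=> //; apply/negP.
set w2 := tilde P W i j ^+ 2.
have w2_gt0 : 0 < w2 by rewrite exprn_even_gt0.
have cvg_sq : (fun k => tilde P (u_ k) i j ^+ 2) @ \oo --> w2.
  by under eq_fun do rewrite expr2; rewrite /w2 expr2; apply: cvgM; exact: cvg_tilde.
have near_sq : \forall k \near \oo, w2 / 2 < tilde P (u_ k) i j ^+ 2.
  by apply: (cvgr_gt _ cvg_sq); lra.
move: aff_ij; rewrite /aff_pat le_eqVlt => /andP[/orP[/eqP lam_i | lam_i] lam_j]; last first.
  near=> k; rewrite /q_approx quad_on_notin ?leey // => -[_ zu].
  have := zu i j; rewrite /neg_pair !lam_neg_lt0 lam_i lam_j => /(_ erefl) u0.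
  have uk : w2 / 2 < tilde P (u_ k) i j ^+ 2 by near: k.
  by move: uk; rewrite u0 expr0n /=; lra.
set a := - lam j * (w2 / 2).
have a0 : 0 < a by rewrite /a mulr_gt0 //; lra.
near=> k; apply: le_trans (_ : ((curv (lam_approx k) (lam_neg lam) i j *
    tilde P (u_ k) i j ^+ 2)%:E <= q_approx k (u_ k))%E).
  rewrite lee_fin curv_approx_beta // -mulrA.
  have k_big : r / a <= k.+1%:R.
    have : r / a <= k%:R by near: k; exact: nbhs_infty_ger.
    by move/le_trans; apply; rewrite ler_nat.
  have uk : w2 / 2 < tilde P (u_ k) i j ^+ 2 by near: k.
  rewrite ler_pdivrMr // /a in k_big.
  have kpos : 0 <= - lam j * k.+1%:R by rewrite mulr_ge0 ?ler0n //; lra.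
  by have := ler_wpM2l kpos (ltW uk); lra.
have [Lu|notLu] := pselect (pattern_space P (neg_pair (lam_neg lam)) (u_ k)).
  rewrite /q_approx quad_on_in // lee_fin; apply: wsqsum_ge_term => i' j'.
  exact: curv_ge0.
by rewrite /q_approx quad_on_notin // leey.
Unshelve. all: by end_near.
Qed.

Lemma epi_conv_q_approx : epi_conv (@symS R n) q_approx q_lim.
Proof.
move=> W sW; split=> [u_ su uW|]; last first.
  exists (fun=> W); split=> //; split; first exact: cvg_cst.
  have [LW|notLW] := pselect (pattern_space P aff_pat W); last by rewrite /q_lim quad_on_notin // leey.
  by apply: limn_esup_le => r r_gt; near=> k; rewrite q_approx_eq_aff // ltW.
apply: limn_einf_ge => r r_lt.
have [LW|notLW] := pselect (pattern_space P aff_pat W); last first.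
  exact: q_approx_off_aff uW notLW sW r.
move: r_lt; rewrite /q_lim quad_on_in // lte_fin => r_lt; near=> k.
have lb : r < wsqsum P (curv (lam_pos lam) (lam_neg lam)) (u_ k).
  by near: k; exact: (cvgr_gt _ (cvg_wsqsum P _ uW) _ r_lt).
by apply: le_trans _ (q_approx_ge k (u_ k)); rewrite lee_fin ltW.
Unshelve. all: by end_near.
Qed.

Lemma q_lim_formula H : symS H -> q_lim H =
  ((\sum_(i < n | 0 < lam i) \sum_(j < n | lam j < 0)
      (- lam j / lam i) * ((P^T *m H *m P) i j) ^+ 2)%:E
   + delta_set (aff_crit P lam) H)%E.
Proof.
move=> sH; rewrite /q_lim /quad_on; congr (_%:E + _)%E.
  rewrite /wsqsum [RHS]big_mkcond; apply: eq_bigr => i _.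
  rewrite /curv /lam_pos; case: ifP => lam_i /=; last first.
    by apply: big1 => j _; rewrite ltxx mul0r.
  rewrite lam_i [RHS]big_mkcond; apply: eq_bigr => j _; rewrite lam_neg_lt0 /=.
  by case: ifP => lam_j; rewrite ?lam_negE ?mul0r.
rewrite /delta_set; congr (if _ then _ else _); apply/asboolP/asboolP.
  move=> [sH' zH]; split=> //; split=> i j lam_i lam_j; apply: zH.
    by rewrite /aff_pat lam_i lexx lam_j.
  by rewrite /aff_pat ltW.
move=> [_ [zbeta zgamma]]; split=> // i j; rewrite /aff_pat le_eqVlt.
by move=> /andP[/orP[/eqP|] lam_i lam_j]; [exact: zbeta | exact: zgamma].
Qed.

Lemma cvg_Zmu_approx :
  (fun k => Zmu P (lam_approx k)) @ \oo --> untilde P (diagf (lam_pos lam)).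
Proof.
pose beta i : R := (lam i == 0)%:R.
have split_k k : Zmu P (lam_approx k) =
    untilde P (diagf (lam_pos lam)) + k.+1%:R^-1 *: untilde P (diagf beta).
  rewrite /Zmu -untildeZ -untildeD; congr (untilde P _); apply/matrixP => i j.
  rewrite addmxE scalemxE !diagfE /lam_approx /lam_pos /beta.
  case: (i == j); last by rewrite mulr0 addr0.
  by case: (ltgtP (lam i) 0) => lam_i; rewrite ?mulr0 ?addr0 ?mulr1 ?add0r.
rewrite (funext split_k) -[X in _ --> X]addr0 -(scale0r (untilde P (diagf beta))).
apply: cvgD; first exact: cvg_cst.
by apply: cvgZ; [exact: cvg_harmonic | exact: cvg_cst].
Qed.

Lemma quad_bundle_q_lim :
  quad_bundle (@symS R n) (@frob R n) (@delta_psd R n)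
    (untilde P (diagf (lam_pos lam))) (untilde P (diagf (lam_neg lam))) q_lim.
Proof.
split.
  apply: (gen_quad_form_quad_on P (curv (lam_pos lam) (lam_neg lam)) aff_pat) => //.
  exact: curv_ge0.
exists (fun k => Zmu P (lam_approx k)), (fun=> Ynu P (lam_neg lam)); split.
  by move=> k; split; apply: untilde_sym; exact: diagf_tr.
split; first exact: cvg_Zmu_approx.
split; first exact: cvg_cst.
split; first by move=> k; exact: (gen_twice_diff_psd P HP _ _ (strict_compl_approx k)).
apply: (epi_conv_eq_on _ epi_conv_q_approx) => k W sW.
rewrite (second_subderiv_psd P HP _ _ (strict_compl_approx k)) //.
exact: quad_on_halve.
Qed.

End Approximation.

Theorem proposition3p2 (R : realType) (m n : nat)
  (f : 'rV[R]_m -> R) (G : 'rV[R]_m -> 'M[R]_n)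
  (HGsym : forall x, symS (G x))
  (Hf : C2 f) (HG : C2 G)
  (xb : 'rV[R]_m) (Hstat : stationary f G xb)
  (Yb : 'M[R]_n) (HY : multiplier f G xb Yb)
  (P : 'M[R]_n) (lam : 'I_n -> R)
  (HP : P^T *m P = 1%:M)
  (Hlam : forall i j : 'I_n, (i <= j)%N -> lam j <= lam i)
  (Hdec : G xb + Yb = P *m diag_mx (\row_i lam i) *m P^T) :
  exists q : 'M[R]_n -> \bar R,
    quad_bundle (@symS R n) (@frob R n) (@delta_psd R n) (G xb) Yb q /\
    forall H : 'M[R]_n, symS H ->
      q H = ((- 2^-1 * Upsilon (G xb) Yb H)%:E + delta_set (aff_crit P lam) H)%E /\
      ((- 2^-1 * Upsilon (G xb) Yb H)%:E + delta_set (aff_crit P lam) H)%E =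
      ((\sum_(i < n | 0 < lam i) \sum_(j < n | lam j < 0)
           (- lam j / lam i) * ((P^T *m H *m P) i j) ^+ 2)%:E
        + delta_set (aff_crit P lam) H)%E.
Proof.
have [_ [psdG [nsdY compl]]] := HY.
have [-> ->] := complementary_decomp lam P HP psdG nsdY compl Hdec.
exists (q_lim P lam); split; first exact: quad_bundle_q_lim.
by move=> H sH; rewrite q_lim_formula // Upsilon_diag.
Qed.
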